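(* Consider a finite set of jobs $1,\dots,n$ to be processed on a single machine with preemption, where job $i$ has release time $r_i\ge 0$ and size (processing requirement) $p_i>0$. Let $S=[s_1,\dots,s_n]$ be an ordering of the jobs, and let $\omega$ be any schedule with completion sequence $S$. Then the schedule $\mathrm{Pri}_S$ dominates $\omega$, i.e. $C_{i,\mathrm{Pri}_S}\le C_{i,\omega}$ for every job $i$.
   Context: A schedule is a (measurable) function $\omega(i,t)\ge 0$ giving the fraction of the machine's unit-rate resource allocated to job $i$ at time $t$, with $\sum_i \omega(i,t)\le 1$ for all $t$, and $\omega(i,t)=0$ whenever job $i$ is not pending at time $t$. Job $i$ is pending at time $t$ if it has been released ($t\ge r_i$) and not yet completed. The completion time $C_{i,\omega}$ of job $i$ under $\omega$ is the earliest time $C$ such that $\int_{r_i}^{C}\omega(i,t)\,dt = p_i$. A schedule $\omega$ dominates a schedule $\omega'$ if $C_{i,\omega}\le C_{i,\omega'}$ for every job $i$. A completion sequence is an ordering $S=[s_1,\dots,s_n]$ of the jobs; a schedule $\omega$ has completion sequence $S$ if $C_{s_i,\omega}\le C_{s_j,\omega}$ for all $i<j$. For a completion sequence $S$, the schedule $\mathrm{Pri}_S$ is defined by $\mathrm{Pri}_S(i,t)=1$ if $i$ is the first job in $S$ that is pending at time $t$, and $\mathrm{Pri}_S(i,t)=0$ otherwise. *)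

From HB Require Import structures.
From mathcomp Require Import all_boot all_order all_algebra all_fingroup.
From mathcomp Require Import all_classical all_reals all_analysis.
Set Implicit Arguments. Unset Strict Implicit. Unset Printing Implicit Defensive.
Import Order.TTheory GRing.Theory Num.Theory.
Local Open Scope classical_set_scope.
Local Open Scope ring_scope.

Section Scheduling.
Variables (R : realType) (n : nat).
Variables (r p : 'I_n -> R).

Definition work (w : 'I_n -> R -> R) (i : 'I_n) (a b : R) : \bar R :=
  (\int[lebesgue_measure]_(t in `[a, b]) (w i t)%:E)%E.

Definition is_completion (w : 'I_n -> R -> R) (i : 'I_n) (C : R) : Prop :=
  work w i (r i) C = (p i)%:E /\
  (forall C', C' < C -> work w i (r i) C' <> (p i)%:E).

Definition pending (w : 'I_n -> R -> R) (i : 'I_n) (t : R) : Prop :=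
  r i <= t /\ (forall C, is_completion w i C -> t < C).

Definition is_schedule (w : 'I_n -> R -> R) : Prop :=
  (forall i, measurable_fun [set: R] (w i)) /\
  (forall i t, 0 <= w i t) /\
  (forall t, \sum_(i < n) w i t <= 1) /\
  (forall i t, ~ pending w i t -> w i t = 0).

(* the completion sequence S = [s_1,...,s_n] is given by a permutation s:
   s k is the (k+1)-th job of S *)
Definition has_completion_sequence (w : 'I_n -> R -> R) (s : {perm 'I_n})
  (C : 'I_n -> R) : Prop :=
  (forall i, is_completion w i (C i)) /\
  (forall k l : 'I_n, (k < l)%N -> C (s k) <= C (s l)).

Definition first_pending (w : 'I_n -> R -> R) (s : {perm 'I_n}) (i : 'I_n) (t : R) : Prop :=
  pending w i t /\ (forall j, pending w j t -> ((s^-1)%g i <= (s^-1)%g j)%N).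

(* w is the schedule Pri_S: Pri_S(i,t) = 1 if i is the first job of S pending
   at t (pending w.r.t. Pri_S itself), and 0 otherwise *)
Definition is_Pri (s : {perm 'I_n}) (w : 'I_n -> R -> R) : Prop :=
  forall i t, (first_pending w s i t -> w i t = 1) /\
              (~ first_pending w s i t -> w i t = 0).

End Scheduling.

From HB Require Import structures.
From mathcomp Require Import all_boot all_order all_algebra all_fingroup.
From mathcomp Require Import all_classical all_reals all_analysis.
From mathcomp Require Import measurable_realfun lra.
Set Implicit Arguments.
Unset Strict Implicit.
Unset Printing Implicit Defensive.
Import Order.TTheory GRing.Theory Num.Theory.
Local Open Scope classical_set_scope.
Local Open Scope ring_scope.

(* Fix job i, let T be its completion time under w and call the jobs up to i
   in S the prefix.  Suppose Pri_S has not completed i by T, and let t0 be the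
   last time before T at which no prefix job is pending under Pri_S.  On
   (t0, T] Pri_S works at full rate on the prefix, so it does T - t0 units of
   prefix work there.  Just before t0, at an idle time t1, every prefix job
   released by t1 is already finished, so that work is done on prefix jobs
   released after t1, and falls short of their total size by the unfinished
   part of i.  But w completes all those jobs inside [t1, T], so their total
   size is at most T - t1: hence t0 - t1 is at least the unfinished part of i,
   which is impossible as t1 may be taken arbitrarily close to t0. *)

Local Notation mu := (@lebesgue_measure _).

Section RealLemmas.
Variable R : realType.

Lemma first_hitting_time (F : R -> R) (a v T : R) :
    (forall c c', c <= c' -> F c <= F c' <= F c + (c' - c)) ->
    F a < v -> v <= F T ->
  exists C, [/\ C <= T, F C = v & forall C', C' < C -> F C' < v].
Proof.
move=> F_lip Fa FT; pose E := [set c | v <= F c].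
have lbE : lbound E a.
  move=> c; rewrite /E /= => vc; rewrite leNgt; apply/negP => ca.
  by have /andP[Fca _] := F_lip _ _ (ltW ca); lra.
have infE : has_inf E by split; [exists T | exists a].
have ge_C c : E c -> inf E <= c by exact: (ge_inf infE.2).
have v_le_FC : v <= F (inf E).
  rewrite leNgt; apply/negP => FC; have e0 : 0 < v - F (inf E) by lra.
  have [c Ec cC] := inf_adherent e0 infE.
  have /andP[_ FcC] := F_lip _ _ (ge_C _ Ec).
  by rewrite /E /= in Ec; lra.
have FC_le_v : F (inf E) <= v.
  rewrite leNgt; apply/negP => FC; pose c := inf E - (F (inf E) - v) / 2.
  have /andP[_ FCc] := F_lip c (inf E) ltac:(rewrite /c; lra).
  have : ~ E c by move/ge_C; rewrite /c; lra.
  move=> nEc; have Fc : F c < v by rewrite ltNge; apply/negP.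
  by rewrite /c in FCc Fc; lra.
exists (inf E); split; first exact: ge_C.
- by apply/eqP; rewrite eq_le FC_le_v.
- by move=> C' C'C; rewrite ltNge; apply/negP => /ge_C; lra.
Qed.

Lemma last_idle_time (busy : R -> Prop) (z T e : R) :
  z <= T -> ~ busy z -> 0 < e ->
  exists t0 t1, [/\ t0 - e < t1, t1 <= t0, t0 <= T, ~ busy t1 &
                    forall t, t0 < t <= T -> busy t].
Proof.
move=> zT idle_z e0; pose Z := [set t | t <= T /\ ~ busy t].
have supZ : has_sup Z by split; [exists z | exists T => t []].
have [t1 [t1T idle_t1] t1e] := sup_adherent e0 supZ.
exists (sup Z), t1; split => //.
- exact: sup_upper_bound.
- by apply: ge_sup; [exists z | move=> t []].
move=> t /andP[t0t tT]; apply: contrapT => idle_t.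
by have := sup_upper_bound supZ (conj tT idle_t); lra.
Qed.

Lemma eq_integral_off (f : R -> R) (D1 D2 : set R) :
  (forall t, D1 t -> ~ D2 t -> f t = 0) ->
  (forall t, D2 t -> ~ D1 t -> f t = 0) ->
  (\int[mu]_(t in D1) (f t)%:E = \int[mu]_(t in D2) (f t)%:E)%E.
Proof.
move=> f1 f2; rewrite [LHS]integral_mkcond [RHS]integral_mkcond.
apply: eq_integral => t _; rewrite /patch.
case: ifPn => [/set_mem t1|/negP t1]; case: ifPn => [/set_mem t2|/negP t2] //.
- by rewrite f1 // => /mem_set.
- by rewrite f2 // => /mem_set.
Qed.

Lemma integral_le_measure (f : R -> R) (D : set R) : measurable D ->
  measurable_fun D (fun t => (f t)%:E) -> (forall t, 0 <= f t <= 1) ->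
  (\int[mu]_(t in D) (f t)%:E <= mu D)%E.
Proof.
move=> mD mf f01; rewrite -[leRHS]mul1e -integral_cst //.
by apply: ge0_le_integral => // t _; rewrite lee_fin; case/andP: (f01 t).
Qed.

Lemma lebesgue_measure_itv_len (a b : R) (l r : bool) : a <= b ->
  mu [set` Interval (BSide l a) (BSide r b)] = (b - a)%:E.
Proof.
move=> ab; rewrite lebesgue_measure_itv /= lte_fin.
case: ifPn => [_|]; first by rewrite EFinB.
rewrite -leNgt => ba; have -> : b = a by apply/le_anti; rewrite ba ab.
by rewrite subrr.
Qed.

End RealLemmas.

Section Schedules.
Variables (R : realType) (n : nat) (r p : 'I_n -> R).

Definition workR (x : 'I_n -> R -> R) (j : 'I_n) (a b : R) : R :=
  fine (work x j a b).

Section OneSchedule.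
Variable x : 'I_n -> R -> R.
Hypothesis hx : is_schedule r p x.

Lemma schedule_ge0 j t : 0 <= x j t.
Proof. by case: hx => _ []. Qed.

Lemma schedule_le1 j t : x j t <= 1.
Proof.
case: hx => _ [_ [sum_le1 _]]; apply: le_trans (sum_le1 t).
by rewrite (bigD1 j) //= lerDl sumr_ge0 // => i _; exact: schedule_ge0.
Qed.

Lemma measurable_schedule (D : set R) j : measurable_fun D (fun t => (x j t)%:E).
Proof.
apply/measurable_EFinP; case: hx => mx _.
exact: measurable_funS measurableT (@subsetT _ D) (mx j).
Qed.

Lemma measurable_schedule_sum (D : set R) (Q : pred 'I_n) :
  measurable_fun D (fun t => (\sum_(j | Q j) x j t)%:E).
Proof.
apply/measurable_EFinP; under eq_fun do rewrite big_mkcond.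
apply: measurable_sum => j; case: (Q j) => //=.
by apply/measurable_EFinP; exact: measurable_schedule.
Qed.

Lemma schedule_before_release j t : t < r j -> x j t = 0.
Proof. by case: hx => _ [_ [_ idle]] tr; apply: idle => -[]; lra. Qed.

Lemma schedule_after_completion j C t :
  is_completion r p x j C -> C <= t -> x j t = 0.
Proof.
by case: hx => _ [_ [_ idle]] jC Ct; apply: idle => -[_ /(_ _ jC)]; lra.
Qed.

Lemma work_ge0 j a b : (0 <= work x j a b)%E.
Proof. by apply: integral_ge0 => t _; rewrite lee_fin schedule_ge0. Qed.

Lemma workRE j a b : work x j a b = (workR x j a b)%:E.
Proof.
rewrite fineK // ge0_fin_numE ?work_ge0 //.
apply: (@le_lt_trans _ _ (mu `[a, b])).
  apply: integral_le_measure => //; first exact: measurable_schedule.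
  by move=> t; rewrite schedule_ge0 schedule_le1.
by rewrite lebesgue_measure_itv; case: ifPn => // _; rewrite -EFinB ltry.
Qed.

Lemma workR_ge0 j a b : 0 <= workR x j a b.
Proof. by rewrite -lee_fin -workRE work_ge0. Qed.

Lemma workR_lipschitz j a c c' : c <= c' ->
  workR x j a c <= workR x j a c' <= workR x j a c + (c' - c).
Proof.
move=> cc'; rewrite -!lee_fin EFinD -!workRE /work.
have acc' : `[a, c] `<=` `[a, c'] by move=> t /=; rewrite !in_itv /=; lra.
rewrite -(setDUK acc') ge0_integral_setU //; first last.
- by rewrite disj_set2E setDIK.
- by move=> t _; rewrite lee_fin schedule_ge0.
- exact: measurable_schedule.
- exact: measurableD.
apply/andP; split.
  by rewrite leeDl // integral_ge0 // => t _; rewrite lee_fin schedule_ge0.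
rewrite leeD2l // -(@lebesgue_measure_itv_len _ c c' false false) //.
apply: (@le_trans _ _ (mu (`[a, c'] `\` `[a, c]))).
  apply: integral_le_measure; first exact: measurableD.
  - exact: measurable_schedule.
  - by move=> t; rewrite schedule_ge0 schedule_le1.
apply: le_measure; rewrite ?inE //=; first exact: measurableD.
by move=> t [/=]; rewrite !in_itv /= => /andP[-> ->] /negP; rewrite -ltNge andbT.
Qed.

Lemma workR_eq0 j a b : b < a -> workR x j a b = 0.
Proof.
by move=> ba; rewrite /workR /work set_itv_ge ?integral_set0 // bnd_simp -ltNge.
Qed.

Lemma workR_after_release j a b : a <= r j -> workR x j a b = workR x j (r j) b.
Proof.
move=> ar; rewrite /workR /work; congr fine; apply: eq_integral_off.
- move=> t /=; rewrite !in_itv /= => /andP[_ tb] rtb.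
  by apply: schedule_before_release; rewrite ltNge; apply: contra_notN rtb => ->.
- by move=> t /=; rewrite !in_itv /= => /andP[rt ->] []; rewrite (le_trans ar).
Qed.

Lemma workR_after_completion j C a b :
  is_completion r p x j C -> C <= a -> workR x j a b = 0.
Proof.
move=> jC Ca; rewrite /workR /work (@eq_integral_off _ _ _ set0) => [|t|//].
  by rewrite integral_set0.
rewrite /= in_itv /= => /andP[a_t _] _.
exact: schedule_after_completion jC (le_trans Ca a_t).
Qed.

Lemma workR_completed j C a b : is_completion r p x j C ->
  a <= r j -> C <= b -> workR x j a b = p j.
Proof.
move=> jC ar Cb; rewrite workR_after_release //.
have <- : workR x j (r j) C = p j by apply/EFin_inj; rewrite -workRE jC.1.
rewrite /workR /work; congr fine; apply: eq_integral_off.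
- move=> t /=; rewrite !in_itv /= => /andP[-> _] /negP; rewrite andTb -ltNge.
  by move/ltW; exact: schedule_after_completion.
- by move=> t /=; rewrite !in_itv /= => /andP[-> tC] []; rewrite (le_trans tC).
Qed.

Lemma exists_completion j T : 0 < p j -> p j <= workR x j (r j) T ->
  exists C, is_completion r p x j C /\ C <= T.
Proof.
move=> pj_gt0 pj_le; have [||C [CT workC first]] :=
  @first_hitting_time _ (workR x j (r j)) (r j - 1) (p j) T _ _ pj_le.
- by move=> c c'; exact: workR_lipschitz.
- by rewrite workR_eq0 //; lra.
exists C; split => //; split => [|C' C'C]; first by rewrite workRE workC.
by rewrite workRE => -[]; have := first _ C'C; lra.
Qed.

Lemma workR_pending j T : 0 < p j ->
  (forall C, is_completion r p x j C -> T < C) -> workR x j (r j) T < p j.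
Proof.
move=> pj_gt0 pend; rewrite ltNge; apply/negP => /(exists_completion pj_gt0).
by move=> [C [/pend]]; lra.
Qed.

Lemma workR_le_size j T : 0 < p j -> workR x j (r j) T <= p j.
Proof.
move=> pj_gt0.
have [[C [jC CT]]|never] := pselect (exists C, is_completion r p x j C /\ C <= T).
  by rewrite (workR_completed jC).
apply/ltW/workR_pending => // C jC; rewrite ltNge; apply/negP => CT.
by apply: never; exists C.
Qed.

Lemma release_le_completion j C : 0 < p j -> is_completion r p x j C -> r j <= C.
Proof.
move=> pj_gt0 [workC _]; rewrite leNgt; apply/negP => Cr.
by move: workC; rewrite workRE workR_eq0 // => -[]; lra.
Qed.

Lemma sum_workRE (Q : pred 'I_n) a b :
  (\sum_(j | Q j) workR x j a b)%:E =
  (\int[mu]_(t in `[a, b]) (\sum_(j | Q j) x j t)%:E)%E.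
Proof.
rewrite -sumEFin; under eq_bigr do rewrite -workRE.
under eq_integral do rewrite -sumEFin -big_filter.
rewrite ge0_integral_sum ?big_filter // => [j|j t _].
- exact: measurable_schedule.
- by rewrite lee_fin schedule_ge0.
Qed.

Lemma sum_workR_le_length (Q : pred 'I_n) a b : a <= b ->
  \sum_(j | Q j) workR x j a b <= b - a.
Proof.
move=> ab; rewrite -lee_fin sum_workRE.
rewrite -(@lebesgue_measure_itv_len _ a b true false ab).
apply: integral_le_measure => //; first exact: measurable_schedule_sum.
move=> t; rewrite sumr_ge0 => [|j _]; last exact: schedule_ge0.
case: hx => _ [_ [sum_le1 _]]; apply: le_trans (sum_le1 t).
by rewrite [leRHS](bigID Q) /= lerDl sumr_ge0 // => j _; exact: schedule_ge0.
Qed.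

Lemma sum_size_le_window (Q : pred 'I_n) C a b :
  (forall j, Q j -> is_completion r p x j (C j)) ->
  (forall j, Q j -> a <= r j) -> (forall j, Q j -> C j <= b) -> a <= b ->
  \sum_(j | Q j) p j <= b - a.
Proof.
move=> QC Qr QCb ab.
suff -> : \sum_(j | Q j) p j = \sum_(j | Q j) workR x j a b.
  exact: sum_workR_le_length.
by apply: eq_bigr => j Qj; rewrite (workR_completed (QC j Qj)) ?Qr ?QCb.
Qed.

Lemma sum_workR_le_sizes (Q : pred 'I_n) i T : (forall j, 0 < p j) -> Q i ->
  \sum_(j | Q j) workR x j (r j) T <=
  \sum_(j | Q j) p j - (p i - workR x i (r i) T).
Proof.
move=> p_gt0 Qi; rewrite (bigD1 i) //= [X in _ <= X - _](bigD1 i) //=.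
suff : \sum_(j | Q j && (j != i)) workR x j (r j) T <=
       \sum_(j | Q j && (j != i)) p j by lra.
by apply: ler_sum => j _; exact: workR_le_size.
Qed.

Lemma sum_workR_idle (Q : pred 'I_n) t1 T :
  ~ (exists j, Q j /\ pending r p x j t1) ->
  \sum_(j | Q j) workR x j t1 T = \sum_(j | Q j && (t1 < r j)) workR x j (r j) T.
Proof.
move=> idle; rewrite (bigID (fun j => t1 < r j)) /= [X in _ + X]big1 ?addr0.
  by apply: eq_bigr => j /andP[_ /ltW]; exact: workR_after_release.
move=> j /andP[Qj]; rewrite -leNgt => rt1.
have [C [jC Ct1]] : exists C, is_completion r p x j C /\ C <= t1.
  apply: contrapT => unfinished; apply: idle; exists j; do 2 split => //.
  move=> C jC.
  by rewrite ltNge; apply: contra_notN unfinished => Ct1; exists C.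
exact: workR_after_completion jC Ct1.
Qed.

End OneSchedule.

Section Priority.
Variables (s : {perm 'I_n}) (Pri : 'I_n -> R -> R).
Hypotheses (hPs : is_schedule r p Pri) (hPri : is_Pri r p s Pri).

Definition prefix (k : 'I_n) (j : 'I_n) : bool := ((s^-1)%g j <= k)%N.

Lemma Pri_busy k t : (exists j, prefix k j /\ pending r p Pri j t) ->
  1 <= \sum_(j | prefix k j) Pri j t.
Proof.
move=> [j [kj pend_j]]; pose Pt := fun i => `[< pending r p Pri i t >].
have Ptj : Pt j by exact/asboolP.
case: (arg_minnP (fun i => (s^-1)%g i) Ptj) => f /asboolP pend_f f_min.
have kf : prefix k f by apply: leq_trans (f_min _ Ptj) kj.
rewrite (bigD1 f) //= ((hPri f t).1 _) ?lerDl ?sumr_ge0 // => [i _|].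
  exact: schedule_ge0.
by split=> // i pend_i; apply/f_min/asboolP.
Qed.

Lemma Pri_busy_work k a t0 T : a <= t0 ->
  (forall t, t0 < t <= T -> exists j, prefix k j /\ pending r p Pri j t) ->
  T - t0 <= \sum_(j | prefix k j) workR Pri j a T.
Proof.
move=> at0 busy; have [t0T|Tt0] := leP t0 T; last first.
  by apply: le_trans (sumr_ge0 _ _) => [|j _]; [lra | exact: workR_ge0].
rewrite -lee_fin sum_workRE //.
rewrite -(@lebesgue_measure_itv_len _ t0 T false false t0T).
rewrite -[leLHS]mul1e -integral_cst //.
apply: (@le_trans _ _
  (\int[mu]_(t in `]t0, T]) (\sum_(j | prefix k j) Pri j t)%:E)%E).
  apply: ge0_le_integral => //; first exact: measurable_schedule_sum.
  by move=> t; rewrite /= in_itv /= lee_fin => /busy; exact: Pri_busy.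
apply: ge0_subset_integral => //; first exact: measurable_schedule_sum.
  by move=> t _; rewrite lee_fin sumr_ge0 // => j _; exact: schedule_ge0.
move=> t /=; rewrite !in_itv /= => /andP[t0t ->].
by rewrite (le_trans at0 (ltW t0t)).
Qed.

End Priority.
End Schedules.

Theorem mainTheorem1 (R : realType) (n : nat) (r p : 'I_n -> R)
  (hr : forall i, 0 <= r i) (hp : forall i, 0 < p i)
  (s : {perm 'I_n}) (w : 'I_n -> R -> R) (Cw : 'I_n -> R)
  (hw : is_schedule r p w) (hseq : has_completion_sequence r p w s Cw)
  (Pri : 'I_n -> R -> R) (hPs : is_schedule r p Pri) (hPri : is_Pri r p s Pri) :
  forall i : 'I_n, exists C : R, is_completion r p Pri i C /\ C <= Cw i.
Proof.
move=> i; set T := Cw i; case: hseq => hCw Cw_mono.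
pose k := (s^-1)%g i.
pose busy t := exists j, prefix s k j /\ pending r p Pri j t.
have prefix_by_T j : prefix s k j -> Cw j <= T.
  rewrite /prefix leq_eqVlt => /orP[/eqP/val_inj/perm_inj -> //|].
  by move/Cw_mono; rewrite !permKV.
apply: contrapT => late.
have pend_i t : r i <= t <= T -> pending r p Pri i t.
  move=> /andP[rt tT]; split => // C iC; rewrite ltNge; apply: contra_notN late.
  by move=> Ct; exists C; split => //; apply: le_trans tT.
pose d := p i - workR Pri i (r i) T.
have d_gt0 : 0 < d.
  rewrite subr_gt0 workR_pending // => C iC.
  by rewrite ltNge; apply: contra_notN late => CT; exists C.
have T_ge0 : 0 <= T.
  by apply: le_trans (hr i) (release_le_completion hw (hp i) (hCw i)).
have idle_before_0 : ~ busy (-1) by move=> [j [_ [rj _]]]; have := hr j; lra.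
have [t0 [t1 [t1_near t1t0 t0T idle_t1 busy_after]]] :=
  last_idle_time (ltac:(lra) : -1 <= T) idle_before_0 d_gt0.
have t1_lt_ri : t1 < r i.
  rewrite ltNge; apply/negP => rt1; apply: idle_t1; exists i.
  by split; [exact: leqnn | apply: pend_i; rewrite rt1 (le_trans t1t0 t0T)].
pose B j := prefix s k j && (t1 < r j).
have busy_work : T - t0 <= \sum_(j | B j) workR Pri j (r j) T.
  by rewrite -(sum_workR_idle hPs) //; exact: Pri_busy_work t1t0 busy_after.
have unfinished_i : \sum_(j | B j) workR Pri j (r j) T <= \sum_(j | B j) p j - d.
  by apply: sum_workR_le_sizes; rewrite // /B /prefix leqnn t1_lt_ri.
have w_window : \sum_(j | B j) p j <= T - t1.
  apply: (sum_size_le_window hw (C := Cw)) => [j _|j /andP[_ /ltW]|j /andP[]|].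
  - exact: hCw.
  - by [].
  - by move/prefix_by_T.
  - exact: le_trans t1t0 t0T.
lra.
Qed.
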